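(* Let $1\le Q<P$ be integers and let $\bm{G}\in\mathbb{R}^{Q\times P}$ be the generator matrix of a real $(P,Q)$ MDS code. Consider the channel $\mathbb{Z}=\bm{G}^T\mathbb{Q}+\mathbb{E}$ under the probabilistic error model described in the context. Then there is a decoder, which given the output $\bm{z}$ either declares ''no errors'', outputs an estimate $\widehat{\bm{e}}\in\mathbb{R}^P$ of the error vector, or declares ''decoding failure'', such that for every error pattern $\mathcal{A}\subseteq\{0,\dots,P-1\}$: (1) if $\mathcal{A}\neq\emptyset$ (i.e. $\mathbb{E}\neq\bm{0}$), then with probability $1$ the decoder detects that errors occurred (it does not declare ''no errors''), regardless of $|\mathcal{A}|$; (2) if $|\mathcal{A}|\le P-Q-1$, then with probability $1$ the decoder's estimate equals the true error vector $\mathbb{E}$ (hence $\mathbb{Q}$ is recovered exactly), without the decoder knowing $|\mathcal{A}|$ in advance; (3) if $|\mathcal{A}|> P-Q-1$, then with probability $1$ the decoder declares a ''decoding failure''.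
   Context: A real $(P,Q)$ MDS code has generator matrix $\bm{G}\in\mathbb{R}^{Q\times P}$ such that every $Q$ columns of $\bm{G}$ are linearly independent; codewords are $\bm{G}^T\bm{q}$ for $\bm{q}\in\mathbb{R}^Q$. Probabilistic error model: the received vector is $\mathbb{Z}=\bm{G}^T\mathbb{Q}+\mathbb{E}\in\mathbb{R}^P$, where $\mathbb{Q}$ is a random vector in $\mathbb{R}^Q$ independent of $\mathbb{E}$; the set $\mathcal{A}$ of error locations can have any cardinality from $0$ to $P$ and may be chosen adversarially (independently of the error values), and given $\mathcal{A}$ the entries of $\mathbb{E}$ indexed by $\mathcal{A}$ are i.i.d. Gaussian (nondegenerate) random variables while the remaining entries are $0$. *)

From HB Require Import structures.
From mathcomp Require Import all_boot all_order all_algebra.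
From mathcomp Require Import all_classical all_reals all_analysis.
Set Implicit Arguments. Unset Strict Implicit. Unset Printing Implicit Defensive.
Import Order.TTheory GRing.Theory Num.Theory.
Local Open Scope classical_set_scope.
Local Open Scope ring_scope.

(* Real (p,q) MDS code: generator G : q x p, every q columns linearly
   independent, i.e. for every injective choice f of q column indices the
   q x q submatrix of those columns has linearly independent columns. *)
Definition MDS_gen (R : fieldType) (q p : nat) (G : 'M[R]_(q, p)) : Prop :=
  forall f : 'I_q -> 'I_p, injective f -> row_free (colsub f G)^T.

Inductive dec_out (R : Type) (p : nat) : Type :=
| NoErrors
| Estimate of 'cV[R]_p
| Failure.
Arguments NoErrors {R p}.
Arguments Failure {R p}.

Definition dec_estimate (R : fieldType) (p : nat) (o : dec_out R p)
  : option 'cV[R]_p :=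
  match o with
  | NoErrors => Some 0
  | Estimate e => Some e
  | Failure => None
  end.

Definition preimg_on (T R : Type) (n : nat) (X : 'I_n -> T -> R)
  (B : 'I_n -> set R) (S : {set 'I_n}) : set T :=
  \big[setI/setT]_(i in S) (X i @^-1` B i).

(* Independence of the random vectors (X_i)_{i in S} and (Y_j)_{j in S'}
   (product rule on the generating pi-system of measurable rectangles). *)
Definition indep_vecs (d : measure_display) (T : measurableType d)
  (R : realType) (P : probability T R) (n m : nat)
  (X : 'I_n -> T -> R) (S : {set 'I_n}) (Y : 'I_m -> T -> R) (S' : {set 'I_m})
  : Prop :=
  forall (B : 'I_n -> set R) (C : 'I_m -> set R),
    (forall i, measurable (B i)) -> (forall j, measurable (C j)) ->
    P (preimg_on X B S `&` preimg_on Y C S') =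
    (P (preimg_on X B S) * P (preimg_on Y C S'))%E.

Definition iid_normal_on (d : measure_display) (T : measurableType d)
  (R : realType) (P : probability T R) (n : nat)
  (E : 'I_n -> T -> R) (A : {set 'I_n}) (mu s : R) : Prop :=
  forall C : 'I_n -> set R, (forall j, measurable (C j)) ->
    P (preimg_on E C A) = (\prod_(j in A) normal_prob mu s (C j))%E.

Definition vec_of (T R : Type) (n : nat) (X : 'I_n -> T -> R) (w : T)
  : 'cV[R]_n := \col_i X i w.

From HB Require Import structures.
From mathcomp Require Import all_boot all_order all_algebra.
From mathcomp Require Import all_classical all_reals all_analysis.
From mathcomp Require Import measurable_realfun ring zify.
Import Order.TTheory GRing.Theory Num.Theory.
Local Open Scope classical_set_scope.
Local Open Scope ring_scope.
Set Implicit Arguments. Unset Strict Implicit. Unset Printing Implicit Defensive.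

(* The decoder declares "no errors" on codewords and otherwise returns some
   error vector e with |supp e| + q < p for which z - e is a codeword, failing
   when there is none.  Since Z - E is always a codeword, only E matters, and
   the decoder behaves as claimed whenever E is generic: for no B with
   |B| + q < p and A not contained in B is E a codeword plus a vector supported
   on B.  Generic errors are detected (take B empty), and for |A| + q < p the
   estimate is E itself because a nonzero codeword has at least p - q + 1
   nonzero entries.  For fixed B and a in A \ B the MDS property yields a
   parity check c vanishing on B with c_a <> 0, so a non-generic E satisfies
   E_a = Y for a linear combination Y of the other Gaussian entries.  By the
   pi-lambda theorem E_a is independent of Y, and its law has a bounded
   density, so P(E_a = Y) <= 2 K del for every mesh del of a grid of cells,
   i.e. P(E_a = Y) = 0. *)

Lemma not_submx_kernel (R : fieldType) (m n : nat) (M : 'M[R]_(m, n)) (v : 'rV[R]_n) :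
  ~~ (v <= M)%MS -> exists2 c : 'cV[R]_n, M *m c = 0 & (v *m c) 0 0 != 0.
Proof.
rewrite submxE => vK.
have [j vKj] : exists j, (v *m cokermx M) 0 j != 0.
  apply/existsP; move: vK; apply: contraNT => /existsPn vK0.
  by apply/eqP/rowP => j; rewrite [RHS]mxE; apply/eqP/negPn/vK0.
exists (col j (cokermx M)); first by rewrite colE mulmxA mulmx_coker mul0mx.
by rewrite colE mulmxA -colE mxE.
Qed.

Section mds_code.
Variables (R : fieldType) (p q : nat) (G : 'M[R]_(q, p)).

Definition codeword (z : 'cV[R]_p) : Prop := exists x, z = G^T *m x.

Definition supported_on (e : 'cV[R]_p) (B : {set 'I_p}) : Prop :=
  forall i, i \notin B -> e i 0 = 0.

Lemma codewordB z z' : codeword z -> codeword z' -> codeword (z - z').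
Proof. by move=> [x ->] [x' ->]; exists (x - x'); rewrite mulmxBr. Qed.

Lemma supported_on_set0 e : supported_on e finset.set0 -> e = 0.
Proof. by move=> e0; apply/matrixP => i j; rewrite ord1 mxE e0 ?inE. Qed.

Hypothesis mdsG : MDS_gen G.

Lemma mds_row_eq0 (y : 'rV[R]_q) (F : {set 'I_p}) :
  (q <= #|F|)%N -> (forall i, i \in F -> (y *m G) 0 i = 0) -> y = 0.
Proof.
move=> qF yF.
pose f k : 'I_p := enum_val (widen_ord qF k).
have f_inj : injective f by move=> k k' /enum_val_inj /(congr1 val) /= /val_inj.
have := mdsG f_inj; rewrite row_free_unit unitmx_tr => Gf_unit.
have yGf : y *m colsub f G = 0.
  apply/rowP => k; rewrite [RHS]mxE -(yF (f k) (enum_valP _)) !mxE.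
  by apply: eq_bigr => l _; rewrite !mxE.
by rewrite -[y]mulmx1 -(mulmxV Gf_unit) mulmxA yGf mul0mx.
Qed.

Lemma mds_supported_codeword_eq0 z (B : {set 'I_p}) :
  (#|B| + q <= p)%N -> supported_on z B -> codeword z -> z = 0.
Proof.
move=> Bq zB [x zx]; rewrite zx; suff -> : x = 0 by rewrite mulmx0.
apply: trmx_inj; rewrite trmx0; apply: (@mds_row_eq0 _ (~: B)).
  by have := cardsC B; rewrite card_ord; lia.
move=> i; rewrite inE => iB; rewrite -[G]trmxK -trmx_mul mxE -zx; exact: zB.
Qed.

Lemma mds_parity_check (B : {set 'I_p}) (a : 'I_p) :
  (#|B| + q < p)%N -> a \notin B ->
  exists c : 'cV[R]_p, [/\ G *m c = 0, c a 0 != 0 & forall b, b \in B -> c b 0 = 0].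
Proof.
move=> Bq aB.
pose D : 'M[R]_p := diag_mx (\row_i (i \in B)%:R).
pose ea : 'rV[R]_p := delta_mx 0 a.
(* If e_a = y G + r D, then y G vanishes off a |: B, hence y = 0 by the MDS
   property; but r D vanishes at a. *)
have ea_notin : ~~ (ea <= col_mx G D)%MS.
  apply/negP => /submxP[u]; rewrite -[u]hsubmxK mul_row_col mul_mx_diag => ea_u.
  have yG i : i \notin B -> (lsubmx u *m G) 0 i = (i == a)%:R.
    move=> iB; move/rowP/(_ i): ea_u.
    by rewrite [RHS]mxE [X in _ + X]mxE !mxE (negbTE iB) mulr0 addr0 eqxx => <-.
  have y0 : lsubmx u = 0.
    apply: (@mds_row_eq0 _ (~: (a |: B))) => [|i].
      move: Bq (cardsC (a |: B)); rewrite cardsU1 aB card_ord.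
      by move: #|B| #|~: _| => l k /=; lia.
    by rewrite !inE negb_or => /andP[/negbTE ia iB]; rewrite yG // ia.
  by have := yG a aB; rewrite y0 mul0mx mxE eqxx => /esym/eqP; rewrite oner_eq0.
have [c GDc eac] := not_submx_kernel ea_notin.
move: GDc; rewrite mul_col_mx => /eqP; rewrite col_mx_eq0 => /andP[/eqP Gc /eqP Dc].
exists c; split => //; first by rewrite -rowE mxE in eac.
by move=> b bB; move/colP/(_ b): Dc; rewrite mul_diag_mx !mxE bB mul1r.
Qed.
End mds_code.

Section decoding.
Variables (R : fieldType) (p q : nat) (G : 'M[R]_(q, p)).

Definition correctable (z e : 'cV[R]_p) : Prop :=
  exists B : {set 'I_p},
    [/\ (#|B| + q < p)%N, supported_on e B & codeword G (z - e)].

Definition decoder_spec (z : 'cV[R]_p) (o : dec_out R p) : Prop :=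
  match o with
  | NoErrors => codeword G z
  | Estimate e => ~ codeword G z /\ correctable z e
  | Failure => ~ codeword G z /\ forall e, ~ correctable z e
  end.

Lemma decoder_spec_exists : exists dec, forall z, decoder_spec z (dec z).
Proof.
suff /boolp.choice[dec decP] : forall z, exists o, decoder_spec z o by exists dec.
move=> z; have [cz|ncz] := pselect (codeword G z); first by exists NoErrors.
have [[e ze]|nze] := pselect (exists e, correctable z e).
  by exists (Estimate e).
by exists Failure; split=> // e ze; apply: nze; exists e.
Qed.

Definition generic_error (A : {set 'I_p}) (v : 'cV[R]_p) : Prop :=
  forall (B : {set 'I_p}) (e : 'cV[R]_p), (#|B| + q < p)%N ->
    ~~ (A \subset B) -> supported_on e B -> ~ codeword G (v - e).

Hypotheses (mdsG : MDS_gen G) (qp : (q < p)%N).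
Variables (A : {set 'I_p}) (v z : 'cV[R]_p).
Hypotheses (vA : supported_on v A) (v_generic : generic_error A v).
Hypothesis zv : codeword G (z - v).

Let codeword_diff e : codeword G (z - e) -> codeword G (v - e).
Proof.
move=> ze; have -> : v - e = (z - e) - (z - v) by rewrite [RHS]addrC opprB addrA subrK.
exact: codewordB.
Qed.

Lemma generic_not_codeword : A != finset.set0 -> ~ codeword G z.
Proof.
move=> A0 cz; apply: (v_generic (B := finset.set0) (e := 0)).
- by rewrite cards0.
- by rewrite finset.subset0.
- by move=> i; rewrite mxE.
- by apply: codeword_diff; rewrite subr0.
Qed.

Lemma correctable_subset e (B : {set 'I_p}) :
  (#|B| + q < p)%N -> supported_on e B -> codeword G (z - e) -> A \subset B.
Proof.
by move=> Bq eB ze; apply: contraT => AB; case: (v_generic Bq AB eB (codeword_diff ze)).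
Qed.

Lemma generic_correctable_eq e : correctable z e -> e = v.
Proof.
move=> [B [Bq eB ze]]; have /fintype.subsetP AB := correctable_subset Bq eB ze.
apply/esym/subr0_eq; apply: (mds_supported_codeword_eq0 mdsG (B := B)); first exact: ltnW.
- move=> i iB; rewrite !mxE eB // vA ?subr0 //.
  by apply: contra iB; apply: AB.
- exact: codeword_diff.
Qed.

Lemma correctable_error : (#|A| + q < p)%N -> correctable z v.
Proof. by move=> Aq; exists A. Qed.

Lemma generic_not_correctable e : (p <= #|A| + q)%N -> ~ correctable z e.
Proof.
move=> Aq [B [Bq eB ze]]; have := subset_leq_card (correctable_subset Bq eB ze).
by move: Aq Bq; move: #|A| #|B| => k l; lia.
Qed.

Lemma decoder_detects o : decoder_spec z o -> A != finset.set0 -> o <> NoErrors.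
Proof. by move=> + A0 o0; rewrite o0; exact: generic_not_codeword. Qed.

Lemma decoder_corrects o :
  decoder_spec z o -> (#|A| + q < p)%N -> dec_estimate o = Some v.
Proof.
case: o => [cz|e [_ ze]|[_ nze]] Aq /=.
- have [A0|A0] := eqVneq A finset.set0; last by case: (generic_not_codeword A0).
  by rewrite (@supported_on_set0 _ _ v) // -A0.
- by rewrite (generic_correctable_eq ze).
- by case: (nze _ (correctable_error Aq)).
Qed.

Lemma decoder_fails o : decoder_spec z o -> (p <= #|A| + q)%N -> o = Failure.
Proof.
move=> o_spec Aq; have A0 : A != finset.set0.
  by rewrite -card_gt0; move: Aq; move: #|A| => k; lia.
case: o o_spec => [cz|e [_ ze]|//]; first by case: (generic_not_codeword A0).
by case: (generic_not_correctable Aq ze).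
Qed.
End decoding.

Lemma measurable_preimageT d (T : measurableType d) (R : realType)
    (f : T -> R) (B : set R) :
  measurable_fun setT f -> measurable B -> measurable (f @^-1` B).
Proof. by move=> mf mB; rewrite -[X in measurable X]setTI; exact: mf. Qed.

Lemma measurable_lincomb d (T : measurableType d) (R : realType) n
    (S : {set 'I_n}) (c : 'I_n -> R) (X : 'I_n -> T -> R) :
  (forall j, j \in S -> measurable_fun setT (X j)) ->
  measurable_fun setT (fun w => \sum_(j in S) c j * X j w).
Proof.
move=> mX; under eq_fun do rewrite big_mkcond /=.
apply: measurable_sum => j; case: (boolP (j \in S)) => jS; last exact: measurable_cst.
by apply: measurable_funM; [exact: measurable_cst | exact: mX].
Qed.

Section probability_independence.
Context d (T : measurableType d) (R : realType) (Pr : probability T R).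
Local Open Scope ereal_scope.

Lemma prob_indep_sigma (Gs : set (set T)) (U : set T) :
  measurable U -> setI_closed Gs -> Gs `<=` measurable ->
  (forall S, Gs S -> Pr (U `&` S) = Pr U * Pr S) ->
  forall S, <<s Gs >> S -> Pr (U `&` S) = Pr U * Pr S.
Proof.
move=> mU GsI Gsm GsU.
pose L := [set S | measurable S /\ Pr (U `&` S) = Pr U * Pr S].
suff GsL : <<s Gs >> `<=` L by move=> S /GsL[].
apply: (lambda_system_subset GsI) => //; last first.
  by move=> S GS; split; [exact: Gsm | exact: GsU].
have PU_fin : Pr U \is a fin_num by exact: fin_num_measure.
apply/dynkin_lambda_system; split.
- by split => //; rewrite setIT probability_setT mule1.
- move=> S [mS US]; split; first exact: measurableC.
  rewrite -setDE measureD //; last exact: (le_lt_trans (probability_le1 _ mU)) (ltry _).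
  transitivity (Pr U - Pr U * Pr S); first by congr (_ - _); exact: US.
  by rewrite probability_setC // muleBr ?mule1 // fin_num_adde_defr.
- move=> F tF LF; have mF k : measurable (F k) by case: (LF k).
  split; first exact: bigcup_measurable.
  rewrite setI_bigcupr measure_semi_bigcup //; first last.
  + by apply: bigcup_measurable => k _; exact: measurableI.
  + exact: trivIset_setIl.
  + by move=> k; exact: measurableI.
  rewrite (eq_eseriesr (fun k _ => (LF k).2)) -(fineK PU_fin) nneseriesZl //.
  by rewrite measure_semi_bigcup //; exact: bigcup_measurable.
Qed.
End probability_independence.

Section preimg_on.
Variables (T R : Type) (n : nat) (X : 'I_n -> T -> R).

Lemma preimg_onD1 (B : 'I_n -> set R) (S : {set 'I_n}) a : a \in S ->
  preimg_on X B S = X a @^-1` B a `&` preimg_on X B (S :\ a).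
Proof. by move=> aS; rewrite /preimg_on (big_setD1 a aS). Qed.

Lemma eq_preimg_on (B B' : 'I_n -> set R) (S : {set 'I_n}) :
  (forall j, j \in S -> B j = B' j) -> preimg_on X B S = preimg_on X B' S.
Proof. by move=> BB'; apply: eq_bigr => j /BB' ->. Qed.

Lemma preimg_on_setT (S : {set 'I_n}) : preimg_on X (fun=> setT) S = setT.
Proof. by rewrite /preimg_on big1 // => j _; rewrite preimage_setT. Qed.

Lemma preimg_onI (B B' : 'I_n -> set R) (S : {set 'I_n}) :
  preimg_on X B S `&` preimg_on X B' S = preimg_on X (fun j => B j `&` B' j) S.
Proof.
by rewrite /preimg_on -big_split /=; apply: eq_bigr => j _; rewrite preimage_setI.
Qed.

Lemma preimg_on1 (S : {set 'I_n}) j (D : set R) : j \in S ->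
  preimg_on X [eta fun=> setT with j |-> D] S = X j @^-1` D.
Proof.
move=> jS; rewrite (preimg_onD1 _ jS) /= eqxx (@eq_preimg_on _ (fun=> setT)).
  by rewrite preimg_on_setT setIT.
by move=> i; rewrite !inE => /andP[/negbTE ij _] /=; rewrite ij.
Qed.
End preimg_on.

Lemma measurable_preimg_on d (T : measurableType d) (R : realType) n
    (X : 'I_n -> T -> R) (B : 'I_n -> set R) (S : {set 'I_n}) :
  (forall j, j \in S -> measurable_fun setT (X j)) ->
  (forall j, measurable (B j)) -> measurable (preimg_on X B S).
Proof.
move=> mX mB; apply: bigsetI_measurable => j jS.
exact: measurable_preimageT (mX j jS) (mB j).
Qed.

Section grid.
Variables (R : realType) (del : R).
Hypothesis del_gt0 : 0 < del.

Definition grid_up (k : nat) : set R := `[k%:R * del, k.+1%:R * del[%classic.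
Definition grid_down (k : nat) : set R :=
  `]- (k.+1%:R * del), - (k%:R * del)]%classic.

Lemma grid_up_truncn k x : grid_up k x -> Num.truncn (x / del) = k.
Proof.
rewrite /grid_up /= in_itv /= => /andP[kx xk]; apply: truncn_def.
by rewrite ler_pdivlMr // ltr_pdivrMr // kx xk.
Qed.

Lemma grid_down_truncn k x : grid_down k x -> Num.truncn (- x / del) = k.
Proof.
rewrite /grid_down /= in_itv /= => /andP[kx xk]; apply: truncn_def.
by rewrite ler_pdivlMr // ltr_pdivrMr // lerNr xk ltrNl kx.
Qed.

Lemma grid_cover x : exists k, grid_up k x \/ grid_down k x.
Proof.
have [x0|x0] := leP 0 x.
  exists (Num.truncn (x / del)); left; rewrite /grid_up /= in_itv /=.
  have /andP[kx xk] := truncn_itv (divr_ge0 x0 (ltW del_gt0)).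
  by rewrite -ler_pdivlMr // -ltr_pdivrMr // kx xk.
exists (Num.truncn (- x / del)); right; rewrite /grid_down /= in_itv /=.
have nx : 0 <= - x by rewrite oppr_ge0 ltW.
have /andP[kx xk] := truncn_itv (divr_ge0 nx (ltW del_gt0)).
by rewrite ltrNl lerNr -ler_pdivlMr // -ltr_pdivrMr // kx xk.
Qed.

Lemma trivIset_grid_up : trivIset setT grid_up.
Proof.
by move=> i j _ _ [x [/grid_up_truncn <- /grid_up_truncn <-]].
Qed.

Lemma trivIset_grid_down : trivIset setT grid_down.
Proof.
by move=> i j _ _ [x [/grid_down_truncn <- /grid_down_truncn <-]].
Qed.

Let grid_step k : k%:R * del < k.+1%:R * del.
Proof. by rewrite ltr_pM2r // ltr_nat. Qed.

Lemma lebesgue_measure_grid_up k : lebesgue_measure (grid_up k) = del%:E.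
Proof.
rewrite lebesgue_measure_itv /= lte_fin grid_step -EFinB.
by rewrite -mulrBl -natrB // subSnn mul1r.
Qed.

Lemma lebesgue_measure_grid_down k : lebesgue_measure (grid_down k) = del%:E.
Proof.
rewrite lebesgue_measure_itv /= lte_fin ltrN2 grid_step -EFinB.
by rewrite opprK addrC -mulrBl -natrB // subSnn mul1r.
Qed.
End grid.

Section diagonal.
Context d (T : measurableType d) (R : realType) (Pr : probability T R).
Variables (X Y : T -> R) (K : R).
Hypotheses (mX : measurable_fun setT X) (mY : measurable_fun setT Y).
Hypothesis indepXY : forall B I, measurable B -> measurable I ->
  (Pr (X @^-1` B `&` Y @^-1` I) = Pr (X @^-1` B) * Pr (Y @^-1` I))%E.
Hypothesis lawX_le : forall B, measurable B ->
  (Pr (X @^-1` B) <= K%:E * lebesgue_measure B)%E.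
Local Open Scope ereal_scope.

Lemma measurable_diag : measurable [set w | X w = Y w].
Proof.
have := measurable_funB mX mY measurableT (measurable_set1 0%R).
rewrite setTI; congr measurable; apply/seteqP; split => w /=.
  by move/eqP; rewrite subr_eq0 => /eqP.
by move=> ->; rewrite subrr.
Qed.

Lemma prob_diag_bigcup_le (F : nat -> set R) (b : R) :
  (forall k, measurable (F k)) -> trivIset setT F ->
  (forall k, Pr (X @^-1` F k) <= b%:E) ->
  Pr (\bigcup_k (X @^-1` F k `&` Y @^-1` F k)) <= b%:E.
Proof.
move=> mF tF lawF.
have mXF k : measurable (X @^-1` F k) := measurable_preimageT mX (mF k).
have mYF k : measurable (Y @^-1` F k) := measurable_preimageT mY (mF k).
have mXYF k : measurable (X @^-1` F k `&` Y @^-1` F k) by exact: measurableI.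
have b0 : (0 <= b)%R by rewrite -lee_fin (le_trans _ (lawF 0%N)).
have mXY : measurable (\bigcup_k (X @^-1` F k `&` Y @^-1` F k)).
  by apply: bigcup_measurable => k _; exact: mXYF.
apply: (le_trans (measure_sigma_subadditive _ mXYF mXY (@subset_refl _ _))).
apply: (@le_trans _ _ (\sum_(k <oo) (b%:E * Pr (Y @^-1` F k)))).
  apply: lee_nneseries => [k _ _|k _]; first exact: measure_ge0.
  by rewrite /= indepXY //; apply: lee_wpmul2r => //; exact: lawF.
rewrite nneseriesZl // -measure_semi_bigcup //; last first.
- by apply: bigcup_measurable.
- by move=> i j _ _ [w [Fi Fj]]; apply: tF => //; exists (Y w).
rewrite -[leRHS]mule1; apply: lee_wpmul2l; first by rewrite lee_fin.
exact/probability_le1/bigcup_measurable.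
Qed.

Lemma prob_diag_le (del : R) : (0 < del)%R ->
  Pr [set w | X w = Y w] <= (K * del *+ 2)%:E.
Proof.
move=> del_gt0.
pose U (F : nat -> set R) := \bigcup_k (X @^-1` F k `&` Y @^-1` F k).
have mU F : (forall k, measurable (F k)) -> measurable (U F).
  move=> mF; apply: bigcup_measurable => k _.
  by apply: measurableI; apply: measurable_preimageT.
have mup k : measurable (grid_up del k) by exact: measurable_itv.
have mdown k : measurable (grid_down del k) by exact: measurable_itv.
have diag_sub : [set w | X w = Y w] `<=` U (grid_up del) `|` U (grid_down del).
  move=> w /= XY; have [k [up|down]] := grid_cover del_gt0 (Y w).
    by left; exists k => //; rewrite /= XY.
  by right; exists k => //; rewrite /= XY.
have mUU := measurableU _ _ (mU _ mup) (mU _ mdown).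
apply: (le_trans (le_measure _ (mem_set measurable_diag) (mem_set mUU) diag_sub)).
apply: (le_trans (measureU2 _ (mU _ mup) (mU _ mdown))); rewrite mulr2n EFinD.
apply: leeD; apply: prob_diag_bigcup_le => //.
- exact: trivIset_grid_up del_gt0.
- by move=> k; rewrite EFinM -(lebesgue_measure_grid_up del_gt0 k); exact: lawX_le.
- exact: trivIset_grid_down del_gt0.
- by move=> k; rewrite EFinM -(lebesgue_measure_grid_down del_gt0 k); exact: lawX_le.
Qed.

Lemma prob_diag_eq0 : Pr [set w | X w = Y w] = 0.
Proof.
apply/eqP; rewrite eq_le measure_ge0 andbT; apply/lee_addgt0Pr => e e_gt0.
pose M := (`|K| + 1)%R.
have M2_gt0 : (0 < M *+ 2)%R by rewrite pmulrn_lgt0 // ltr_wpDl.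
have del_gt0 : (0 < e / (M *+ 2))%R by rewrite divr_gt0.
apply: (le_trans (prob_diag_le del_gt0)); rewrite add0e lee_fin.
apply: (@le_trans _ _ (M * (e / (M *+ 2)) *+ 2)%R).
  rewrite lerMn2r /= ler_wpM2r ?divr_ge0 ?ltW //.
  by rewrite (le_lt_trans (ler_norm K)) // ltrDl.
by rewrite -mulrnAl mulrC divfK ?gt_eqF.
Qed.
End diagonal.

Lemma normal_prob_le (R : realType) (mu s : R) (B : set R) :
  0 < s -> measurable B ->
  (normal_prob mu s B <= (normal_peak s)%:E * lebesgue_measure B)%E.
Proof.
move=> s_gt0 mB; rewrite /normal_prob -integral_cst //.
apply: ge0_le_integral => //.
- by move=> x _; rewrite lee_fin normal_pdf_ge0.
- by apply/measurable_EFinP/measurable_funTS; exact: measurable_normal_pdf.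
- by move=> x _; rewrite lee_fin normal_pdf_ub // gt_eqF.
Qed.

Section iid_normal.
Context d (T : measurableType d) (R : realType) (Pr : probability T R).
Variables (n : nat) (E : 'I_n -> T -> R) (A : {set 'I_n}) (mu s : R) (a : 'I_n).
Hypotheses (iidE : iid_normal_on Pr E A mu s) (aA : a \in A).

Lemma iid_normal_rect (B : set R) (C : 'I_n -> set R) :
  measurable B -> (forall j, measurable (C j)) ->
  Pr (E a @^-1` B `&` preimg_on E C (A :\ a)) =
  (normal_prob mu s B * Pr (preimg_on E C (A :\ a)))%E.
Proof.
move=> mB mC.
have rect D : measurable D -> Pr (E a @^-1` D `&` preimg_on E C (A :\ a)) =
    (normal_prob mu s D * \prod_(j in A :\ a) normal_prob mu s (C j))%E.
  move=> mD; pose C' := [eta C with a |-> D].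
  have C'C j : j \in A :\ a -> C' j = C j.
    by rewrite !inE => /andP[/negbTE ja _] /=; rewrite ja.
  have mC' j : measurable (C' j) by rewrite /=; case: ifP.
  have := iidE mC'; rewrite (preimg_onD1 _ _ aA) (big_setD1 a aA) /= eqxx.
  rewrite (eq_preimg_on _ C'C) => ->; congr (_ * _)%E.
  by apply: eq_bigr => j; rewrite !inE => /andP[/negbTE ->].
have -> : Pr (preimg_on E C (A :\ a)) =
    Pr (E a @^-1` setT `&` preimg_on E C (A :\ a)) by rewrite preimage_setT setTI.
by rewrite !rect // probability_setT mul1e.
Qed.

Lemma iid_normal_coord (B : set R) :
  measurable B -> Pr (E a @^-1` B) = normal_prob mu s B.
Proof.
move=> mB; have := iid_normal_rect mB (C := fun=> setT) (fun=> measurableT).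
by rewrite preimg_on_setT setIT probability_setT mule1.
Qed.

Hypotheses (mE : forall j, measurable_fun setT (E j)) (s_gt0 : 0 < s).

Lemma iid_normal_indep_lincomb (k : 'I_n -> R) (B I : set R) :
  measurable B -> measurable I ->
  let Y w := \sum_(i in A :\ a) k i * E i w in
  Pr (E a @^-1` B `&` Y @^-1` I) = (Pr (E a @^-1` B) * Pr (Y @^-1` I))%E.
Proof.
move=> mB mI Y.
pose rects := [set preimg_on E C (A :\ a) |
  C in [set C : 'I_n -> set R | forall j, measurable (C j)]].
have Y_rects : <<s rects >> (Y @^-1` I).
  rewrite -[Y @^-1` I]setTI.
  apply: (@measurable_lincomb _ (g_sigma_algebraType rects)) => // j jA _ D mD.
  rewrite setTI; apply: sub_sigma_algebra.
  exists [eta fun=> setT with j |-> D]; last exact: preimg_on1.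
  by move=> i /=; case: ifP.
apply: prob_indep_sigma Y_rects.
- exact: measurable_preimageT.
- move=> _ _ [C mC <-] [C' mC' <-]; exists (fun j => C j `&` C' j).
    by move=> j; exact: measurableI.
  by rewrite preimg_onI.
- by move=> _ [C mC <-]; apply: measurable_preimg_on => // j _.
- by move=> _ [C mC <-]; rewrite iid_normal_rect // iid_normal_coord.
Qed.

Lemma iid_normal_lincomb_negligible (c : 'I_n -> R) : c a != 0 ->
  Pr.-negligible [set w | \sum_(i in A) c i * E i w = 0].
Proof.
move=> ca; pose Y w := \sum_(i in A :\ a) (- c i / c a) * E i w.
have mY : measurable_fun setT Y by apply: measurable_lincomb => j _; exact: mE.
have law B : measurable B ->
    (Pr (E a @^-1` B) <= (normal_peak s)%:E * lebesgue_measure B)%E.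
  by move=> mB; rewrite iid_normal_coord //; exact: normal_prob_le.
exists [set w | E a w = Y w]; split.
- exact: measurable_diag.
- exact: prob_diag_eq0 mY (iid_normal_indep_lincomb _) law.
- move=> w /=; rewrite (big_setD1 a aA) /= => sum0.
  have -> : Y w = - (c a)^-1 * \sum_(i in A :\ a) c i * E i w.
    by rewrite mulr_sumr; apply: eq_bigr => i _; ring.
  have -> : \sum_(i in A :\ a) c i * E i w = - (c a * E a w).
    by apply/eqP; rewrite -addr_eq0 addrC sum0.
  by rewrite mulrNN mulKf.
Qed.
End iid_normal.

Lemma iid_normal_generic_error (R : realType) (p q : nat) (G : 'M[R]_(q, p))
    (A : {set 'I_p}) d (T : measurableType d) (Pr : probability T R)
    (E : 'I_p -> T -> R) (mu s : R) :
  MDS_gen G -> (forall j, measurable_fun setT (E j)) -> 0 < s ->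
  (forall j, j \notin A -> forall w, E j w = 0) -> iid_normal_on Pr E A mu s ->
  {ae Pr, forall w, generic_error G A (vec_of E w)}.
Proof.
move=> mdsG mE s_gt0 EA iidE.
suff ae_B (B : {set 'I_p}) : {ae Pr, forall w, forall e, (#|B| + q < p)%N ->
    ~~ (A \subset B) -> supported_on e B -> ~ codeword G (vec_of E w - e)}.
  exact: filter_forall (ae_filter_ringOfSetsType Pr) ae_B.
have [AB|nAB] := boolP (A \subset B); first by apply: aeW => w e _ /negP.
have [Bq|nBq] := boolP (#|B| + q < p)%N; last by apply: aeW => w e /negP.
have [a aA aB] := subsetPn nAB.
have [c [Gc ca cB]] := mds_parity_check mdsG Bq aB.
have := iid_normal_lincomb_negligible iidE aA mE s_gt0 (c := fun i => c i 0) ca.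
apply: negligibleS => w /= bad.
apply: contrapT => sum_neq0; apply: bad => e _ _ eB [x Ee]; apply: sum_neq0.
have -> : \sum_(i in A) c i 0 * E i w = (c^T *m vec_of E w) 0 0.
  rewrite mxE big_mkcond /=; apply: eq_bigr => i _; rewrite !mxE.
  by case: ifPn => // iA; rewrite EA // mulr0.
move/eqP: Ee; rewrite subr_eq => /eqP ->.
rewrite mulmxDr mulmxA -trmx_mul Gc trmx0 mul0mx add0r mxE big1 // => i _.
rewrite !mxE; have [iB|iB] := boolP (i \in B); first by rewrite cB ?mul0r.
by rewrite (eB i iB) mulr0.
Qed.

Theorem theorem3 (R : realType) (p q : nat) (G : 'M[R]_(q, p)) :
  (1 <= q)%N -> (q < p)%N -> MDS_gen G ->
  exists dec : 'cV[R]_p -> dec_out R p,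
  forall (A : {set 'I_p})
         (d : measure_display) (T : measurableType d) (Pr : probability T R)
         (Qv : 'I_q -> T -> R) (E : 'I_p -> T -> R) (mu s : R),
    (forall i, measurable_fun setT (Qv i)) ->
    (forall j, measurable_fun setT (E j)) ->
    0 < s ->
    (forall j, j \notin A -> forall w, E j w = 0) ->
    iid_normal_on Pr E A mu s ->
    indep_vecs Pr Qv [set: 'I_q] E A ->
    let Z := fun w => G^T *m vec_of Qv w + vec_of E w in
    [/\ A != finset.set0 -> {ae Pr, forall w, dec (Z w) <> NoErrors},
        (#|A| <= p - q - 1)%N ->
          {ae Pr, forall w, dec_estimate (dec (Z w)) = Some (vec_of E w)}
      & (p - q - 1 < #|A|)%N -> {ae Pr, forall w, dec (Z w) = Failure}].
Proof.
(* Z - E is always a codeword. *)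
move=> _ qp mdsG; have [dec decP] := decoder_spec_exists G.
exists dec => A d T Pr Qv E mu s _ mE s_gt0 EA iidE _ Z.
have EA_supp w : supported_on (vec_of E w) A by move=> i iA; rewrite mxE EA.
have Z_E w : codeword G (Z w - vec_of E w) by exists (vec_of Qv w); rewrite /Z addrK.
have generic := iid_normal_generic_error mdsG mE s_gt0 EA iidE.
have Aq_iff : (#|A| <= p - q - 1)%N = (#|A| + q < p)%N.
  by move: #|A| => k; apply/idP/idP; lia.
split=> [A0|Aq|Aq]; apply: filterS generic => w generic.
- exact (decoder_detects qp generic (Z_E w) (decP _) A0).
- rewrite Aq_iff in Aq.
  exact (decoder_corrects mdsG qp (EA_supp w) generic (Z_E w) (decP _) Aq).
- rewrite ltnNge Aq_iff -leqNgt in Aq.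
  exact (decoder_fails qp generic (Z_E w) (decP _) Aq).
Qed.
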